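(* Assume $f_0,f_1\in \mathrm{PL}_0(\mathbf{I})$ generate a standard isomorphic copy of $F$. (Up) Suppose $(a,c)$ is an up-bump of $f_0$, $(b_n,c)$ is an orbital of $f_1$, and $p$ is the minimal number such that $f_0|_{[p,c]}=f_1|_{[p,c]}$. If $q\in(a,p)$ satisfies $qf_0=qf_1$, then $q\in(b_n,p)$. (Down) Suppose $(a,c)$ is a down-bump of $f_0$, $(a,d_1)$ is an orbital of $f_1$, and $\rho$ is the maximal number such that $f_0|_{[a,\rho]}=f_1|_{[a,\rho]}$. If $q\in(\rho,c)$ satisfies $qf_0=qf_1$, then $q\in(\rho,d_1)$.
   Context: $\mathrm{PL}_0(\mathbf{I})$ is the group of orientation-preserving piecewise-linear homeomorphisms of $[0,1]$ with finitely many points of non-differentiability; functions act on the right ($tf=f(t)$). The orbitals of $f$ are the connected components (open intervals) of $\operatorname{Supp}(f)=\{x: xf\ne x\}$; an orbital $A$ is an up-bump (resp. down-bump) if $xf>x$ (resp. $xf<x$) for all $x\in A$. Thompson's group $F=\langle x_0,x_1\mid [x_0x_1^{-1},x_1^{x_0}]=[x_0x_1^{-1},x_1^{x_0^2}]=1\rangle$, with $a^b=b^{-1}ab$, $[a,b]=aba^{-1}b^{-1}$; $f_0,f_1$ generate a standard isomorphic copy of $F$ if $\langle f_0,f_1\rangle\cong F$ via an isomorphism with $x_0\mapsto f_0$, $x_1\mapsto f_1$. *)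

From Stdlib Require Import Reals Lra List.
Import ListNotations.
Open Scope R_scope.

(** Values outside [0,1] are irrelevant. *)
Definition PL0 (f : R -> R) : Prop :=
  f 0 = 0 /\ f 1 = 1 /\
  exists (n : nat) (b : nat -> R),
    b 0%nat = 0 /\ b n = 1 /\
    (forall i, (i < n)%nat -> b i < b (S i)) /\
    (forall i, (i < n)%nat -> exists m c, 0 < m /\
        forall t, b i <= t <= b (S i) -> f t = m * t + c).

Definition PL0_inverse (f g : R -> R) : Prop :=
  PL0 g /\ forall t, 0 <= t <= 1 -> g (f t) = t /\ f (g t) = t.

(** Support and orbitals.  (a,c) is an orbital of f iff it is a connected
    component of Supp(f) = {x in [0,1] : xf <> x}, i.e. (a,c) is contained in
    Supp(f) and its endpoints are not in Supp(f). *)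
Definition in_supp (f : R -> R) (x : R) : Prop := 0 <= x <= 1 /\ f x <> x.

Definition orbital (f : R -> R) (a c : R) : Prop :=
  0 <= a < c /\ c <= 1 /\ ~ in_supp f a /\ ~ in_supp f c /\
  (forall x, a < x < c -> in_supp f x).

Definition up_bump (f : R -> R) (a c : R) : Prop :=
  orbital f a c /\ forall x, a < x < c -> f x > x.

Definition down_bump (f : R -> R) (a c : R) : Prop :=
  orbital f a c /\ forall x, a < x < c -> f x < x.

(** Words in x0, x1 and their inverses: (i, e) with i = false for x0,
    i = true for x1, e = true for the inverse letter. *)
Definition letter := (bool * bool)%type.
Definition word := list letter.

Definition X0 : word := [(false, false)].
Definition X1 : word := [(true, false)].
Definition winv (w : word) : word :=
  rev (map (fun l : letter => (fst l, negb (snd l))) w).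
Definition wconj (a b : word) : word := winv b ++ a ++ b.
Definition wcomm (a b : word) : word := a ++ b ++ winv a ++ winv b.

Definition relators : list word :=
  [ wcomm (X0 ++ winv X1) (wconj X1 X0);
    wcomm (X0 ++ winv X1) (wconj X1 (X0 ++ X0)) ].

Inductive wequiv : word -> word -> Prop :=
| we_refl w : wequiv w w
| we_sym u v : wequiv u v -> wequiv v u
| we_trans u v w : wequiv u v -> wequiv v w -> wequiv u w
| we_cancel u v (l : letter) :
    wequiv (u ++ [l; (fst l, negb (snd l))] ++ v) (u ++ v)
| we_rel u v r : In r relators -> wequiv (u ++ r ++ v) (u ++ v).

(** Right action: t(w1 w2 ... wk) = (...((t w1) w2)...) wk. *)
Definition gen (f0 f1 g0 g1 : R -> R) (l : letter) : R -> R :=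
  match l with
  | (false, false) => f0 | (false, true) => g0
  | (true, false) => f1  | (true, true) => g1
  end.

Definition weval (f0 f1 g0 g1 : R -> R) (w : word) (t : R) : R :=
  fold_left (fun s l => gen f0 f1 g0 g1 l s) w t.

(** f0, f1 (with inverses g0, g1) generate a standard isomorphic copy of F:
    the assignment x0 |-> f0, x1 |-> f1 induces an isomorphism F -> <f0,f1>,
    i.e. a word is trivial in F iff it evaluates to the identity on [0,1]. *)
Definition standard_copy (f0 f1 g0 g1 : R -> R) : Prop :=
  forall w : word,
    (forall t, 0 <= t <= 1 -> weval f0 f1 g0 g1 w t = t) <-> wequiv w [].

Definition agree_on (f g : R -> R) (x y : R) : Prop :=
  forall t, x <= t <= y -> f t = g t.

(* Suppose q <= b with b a fixed point of f1 inside the up-bump (a, c) of f0.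
   Let z be the last point of [q, b] where f0 and f1 agree and u the last fixed
   point of f1 below z.  The element h = x0 x1^-1 fixes z and no point of
   (z, b], and the relators of F say that h commutes with k = x1^x0 and with
   k2 = x1^(x0^2).  In PL_0(I) a map commuting with phi and fixing one point of
   an orbital (s, t] of phi fixes all of it: iterating phi towards s lands in
   the affine germ of the map at s, which then fixes two distinct points and is
   the identity there.  According as u f0 lies above, at or below z, this forces
   f1 to fix z, f1 to fix points just above u, or h to fix points just above z.
   The Down case is the Up case after conjugating by x |-> 1 - x, which turns
   down-bumps into up-bumps and again gives a standard copy of F. *)

From Stdlib Require Import Reals Lra Psatz Lia List Classical FunctionalExtensionality.
Import ListNotations.
Open Scope R_scope.

Definition affine_on (f : R -> R) (m lo hi : R) : Prop :=
  exists c, forall x, lo <= x <= hi -> f x = m * x + c.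

Record pl_homeo (f : R -> R) : Prop := {
  pl_fix0 : f 0 = 0;
  pl_fix1 : f 1 = 1;
  pl_incr : forall x y, 0 <= x -> x < y -> y <= 1 -> f x < f y;
  pl_left : forall L, 0 < L <= 1 -> exists d m, 0 < d /\ 0 < m /\ affine_on f m (L - d) L;
  pl_right : forall L, 0 <= L < 1 -> exists d m, 0 < d /\ 0 < m /\ affine_on f m L (L + d) }.

Definition inverse01 (f g : R -> R) : Prop :=
  forall x, 0 <= x <= 1 -> g (f x) = x /\ f (g x) = x.

Record pl_pair (f g : R -> R) : Prop := {
  pair_fst : pl_homeo f;
  pair_snd : pl_homeo g;
  pair_inv : inverse01 f g }.

Arguments pl_fix0 {f}. Arguments pl_fix1 {f}. Arguments pl_incr {f}.
Arguments pl_left {f}. Arguments pl_right {f}.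
Arguments pair_fst {f g}. Arguments pair_snd {f g}. Arguments pair_inv {f g}.

Definition commute01 (f g : R -> R) : Prop :=
  forall x, 0 <= x <= 1 -> f (g x) = g (f x).

Definition moves_after (f : R -> R) (s t : R) : Prop :=
  f s = s /\ forall x, s < x <= t -> f x <> x.

Definition flip (f : R -> R) (x : R) : R := 1 - f (1 - x).

Lemma affine_on_sub f m lo hi lo' hi' :
  affine_on f m lo hi -> lo <= lo' -> hi' <= hi -> affine_on f m lo' hi'.
Proof.
  intros [c Hc] Hlo Hhi. exists c. intros x Hx. apply Hc. lra.
Qed.

Lemma affine_on_minus f g m n lo hi :
  affine_on f m lo hi -> affine_on g n lo hi -> affine_on (fun x => f x - g x) (m - n) lo hi.
Proof.
  intros [c Hc] [e He]. exists (c - e). intros x Hx. rewrite Hc, He by exact Hx. ring.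
Qed.

Lemma affine_on_comp f g m n lo hi lo' hi' :
  affine_on g m lo hi -> affine_on f n lo' hi' ->
  (forall x, lo <= x <= hi -> lo' <= g x <= hi') ->
  affine_on (fun x => f (g x)) (n * m) lo hi.
Proof.
  intros [c Hc] [e He] Hwin. exists (n * c + e). intros x Hx.
  rewrite He by (apply Hwin; exact Hx). rewrite Hc by exact Hx. ring.
Qed.

Section PLHomeo.
Context {f : R -> R} (Hf : pl_homeo f).

Lemma pl_range x : 0 <= x <= 1 -> 0 <= f x <= 1.
Proof.
  intros Hx.
  pose proof (pl_fix0 Hf). pose proof (pl_fix1 Hf).
  destruct (Req_dec x 0) as [->|Hx0]; [lra|].
  destruct (Req_dec x 1) as [->|Hx1]; [lra|].
  pose proof (pl_incr Hf 0 x ltac:(lra) ltac:(lra) ltac:(lra)).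
  pose proof (pl_incr Hf x 1 ltac:(lra) ltac:(lra) ltac:(lra)). lra.
Qed.

Lemma pl_le x y : 0 <= x -> x <= y -> y <= 1 -> f x <= f y.
Proof.
  intros Hx Hxy Hy. destruct (Req_dec x y) as [->|Hne]; [lra|].
  left. apply (pl_incr Hf); lra.
Qed.

Lemma pl_inj x y : 0 <= x <= 1 -> 0 <= y <= 1 -> f x = f y -> x = y.
Proof.
  intros Hx Hy Heq. destruct (Rtotal_order x y) as [Hlt|[|Hlt]]; [|assumption|].
  - pose proof (pl_incr Hf x y ltac:(lra) Hlt ltac:(lra)). lra.
  - pose proof (pl_incr Hf y x ltac:(lra) Hlt ltac:(lra)). lra.
Qed.

End PLHomeo.

Lemma pl_homeo_id : pl_homeo (fun x => x).
Proof.
  split; auto.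
  - intros L _. exists 1, 1. repeat split; try lra. exists 0. intros. ring.
  - intros L _. exists 1, 1. repeat split; try lra. exists 0. intros. ring.
Qed.

Lemma exists_small_step d1 d2 m : 0 < d1 -> 0 < d2 -> 0 < m -> exists d, 0 < d <= d1 /\ m * d <= d2.
Proof.
  intros Hd1 Hd2 Hm. exists (Rmin d1 (d2 / m)).
  pose proof (Rmin_l d1 (d2 / m)). pose proof (Rmin_r d1 (d2 / m)).
  split; [split; [apply Rmin_glb_lt; [|apply Rdiv_lt_0_compat]|]; lra|].
  replace d2 with (m * (d2 / m)) at 2 by (field; lra). nra.
Qed.

Lemma pl_homeo_comp f g : pl_homeo f -> pl_homeo g -> pl_homeo (fun x => f (g x)).
Proof.
  intros Hf Hg. split.
  - rewrite (pl_fix0 Hg). apply (pl_fix0 Hf).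
  - rewrite (pl_fix1 Hg). apply (pl_fix1 Hf).
  - intros x y Hx Hxy Hy. apply (pl_incr Hf).
    + apply (pl_range Hg). lra.
    + apply (pl_incr Hg); assumption.
    + apply (pl_range Hg). lra.
  - intros L HL.
    destruct (pl_left Hg L HL) as [d1 [m1 [Hd1 [Hm1 Hg1]]]].
    assert (HgL : 0 < g L <= 1).
    { split; [rewrite <- (pl_fix0 Hg); apply (pl_incr Hg); lra | apply (pl_range Hg); lra]. }
    destruct (pl_left Hf (g L) HgL) as [d2 [m2 [Hd2 [Hm2 Hf2]]]].
    destruct (exists_small_step d1 d2 m1 Hd1 Hd2 Hm1) as [d Hd].
    exists d, (m2 * m1). repeat split; [lra|nra|].
    apply (affine_on_comp f g m1 m2 _ _ (g L - d2) (g L)); [|exact Hf2|].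
    + apply (affine_on_sub _ _ _ _ _ _ Hg1); lra.
    + destruct Hg1 as [c Hc]. intros x Hx.
      rewrite (Hc x), (Hc L) by lra. nra.
  - intros L HL.
    destruct (pl_right Hg L HL) as [d1 [m1 [Hd1 [Hm1 Hg1]]]].
    assert (HgL : 0 <= g L < 1).
    { split; [apply (pl_range Hg); lra | rewrite <- (pl_fix1 Hg); apply (pl_incr Hg); lra]. }
    destruct (pl_right Hf (g L) HgL) as [d2 [m2 [Hd2 [Hm2 Hf2]]]].
    destruct (exists_small_step d1 d2 m1 Hd1 Hd2 Hm1) as [d Hd].
    exists d, (m2 * m1). repeat split; [lra|nra|].
    apply (affine_on_comp f g m1 m2 _ _ (g L) (g L + d2)); [|exact Hf2|].
    + apply (affine_on_sub _ _ _ _ _ _ Hg1); lra.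
    + destruct Hg1 as [c Hc]. intros x Hx.
      rewrite (Hc x), (Hc L) by lra. nra.
Qed.

Section Breakpoints.
Variables (f : R -> R) (n : nat) (b : nat -> R).
Hypotheses (Hb0 : b 0%nat = 0) (Hbn : b n = 1) (Hinc : forall i, (i < n)%nat -> b i < b (S i))
  (Haff : forall i, (i < n)%nat -> exists m c, 0 < m /\
            forall t, b i <= t <= b (S i) -> f t = m * t + c).

Lemma breakpoint_below L : 0 < L <= 1 -> exists i, (i < n)%nat /\ b i < L <= b (S i).
Proof.
  intros HL.
  assert (Hj : forall j, (j <= n)%nat -> L <= b j -> exists i, (i < j)%nat /\ b i < L <= b (S i)).
  { induction j as [|j IH]; intros Hj HLj; [lra|].
    destruct (Rle_or_lt L (b j)) as [Hle|Hlt].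
    - destruct (IH ltac:(lia) Hle) as [i [Hi Hbi]]. exists i. split; [lia|exact Hbi].
    - exists j. split; [lia|lra]. }
  apply Hj; [lia|lra].
Qed.

Lemma breakpoint_above L : 0 <= L < 1 -> exists i, (i < n)%nat /\ b i <= L < b (S i).
Proof.
  intros HL.
  assert (Hj : forall j, (j <= n)%nat -> L < b j -> exists i, (i < j)%nat /\ b i <= L < b (S i)).
  { induction j as [|j IH]; intros Hj HLj; [lra|].
    destruct (Rlt_or_le L (b j)) as [Hlt|Hle].
    - destruct (IH ltac:(lia) Hlt) as [i [Hi Hbi]]. exists i. split; [lia|exact Hbi].
    - exists j. split; [lia|lra]. }
  apply Hj; [lia|lra].
Qed.

Lemma breakpoints_incr i : (i <= n)%nat -> forall x y, 0 <= x -> x < y -> y <= b i -> f x < f y.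
Proof.
  induction i as [|i IH]; intros Hi x y Hx Hxy Hy; [lra|].
  destruct (Rle_or_lt y (b i)) as [Hyi|Hyi]; [apply IH; [lia|lra..]|].
  destruct (Haff i ltac:(lia)) as [m [c [Hm Hc]]]. pose proof (Hinc i ltac:(lia)).
  destruct (Rle_or_lt (b i) x) as [Hix|Hix].
  - rewrite (Hc x), (Hc y) by lra. nra.
  - apply Rlt_trans with (f (b i)); [apply IH; [lia|lra..]|].
    rewrite (Hc (b i)), (Hc y) by lra. nra.
Qed.

End Breakpoints.

Lemma PL0_pl_homeo f : PL0 f -> pl_homeo f.
Proof.
  intros [H0 [H1 [n [b [Hb0 [Hbn [Hinc Haff]]]]]]]. split; auto.
  - intros x y Hx Hxy Hy. apply (breakpoints_incr f n b Hb0 Hinc Haff n); auto; lra.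
  - intros L HL. destruct (breakpoint_below n b Hb0 Hbn L HL) as [i [Hi Hbi]].
    destruct (Haff i Hi) as [m [c [Hm Hc]]].
    exists (L - b i), m. repeat split; [lra|lra|]. exists c. intros x Hx. apply Hc. lra.
  - intros L HL. destruct (breakpoint_above n b Hb0 Hbn L HL) as [i [Hi Hbi]].
    destruct (Haff i Hi) as [m [c [Hm Hc]]].
    exists (b (S i) - L), m. repeat split; [lra|lra|]. exists c. intros x Hx. apply Hc. lra.
Qed.

Lemma PL0_pair f g : PL0 f -> PL0_inverse f g -> pl_pair f g.
Proof.
  intros Hf [Hg Hinv]. split; [apply PL0_pl_homeo; assumption..|exact Hinv].
Qed.

Section PLPair.
Context {f g : R -> R} (P : pl_pair f g).

Lemma pair_sym : pl_pair g f.
Proof.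
  split; [exact (pair_snd P)|exact (pair_fst P)|].
  intros x Hx. destruct (pair_inv P x Hx). split; assumption.
Qed.

Lemma pair_fixed x : 0 <= x <= 1 -> f x = x -> g x = x.
Proof. intros Hx Hfx. rewrite <- Hfx at 1. apply (pair_inv P x Hx). Qed.

Lemma pair_moves_down x : 0 <= x <= 1 -> f x <> x -> f x < x \/ g x < x.
Proof.
  intros Hx Hfx. destruct (Rlt_or_le (f x) x) as [|Hle]; [left; assumption|right].
  pose proof (pl_range (pair_fst P) x Hx).
  rewrite <- (proj1 (pair_inv P x Hx)) at 2. apply (pl_incr (pair_snd P)); lra.
Qed.

Lemma pair_moves_up x : 0 <= x <= 1 -> f x <> x -> x < f x \/ x < g x.
Proof.
  intros Hx Hfx. destruct (Rlt_or_le x (f x)) as [|Hle]; [left; assumption|right].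
  pose proof (pl_range (pair_fst P) x Hx).
  rewrite <- (proj1 (pair_inv P x Hx)) at 1. apply (pl_incr (pair_snd P)); lra.
Qed.

Lemma moves_after_inverse s t : 0 <= s <= t -> t <= 1 -> moves_after f s t -> moves_after g s t.
Proof.
  intros Hs Ht [Hfs Hmv]. split; [apply pair_fixed; [lra|exact Hfs]|].
  intros x Hx Hgx. apply (Hmv x Hx). rewrite <- Hgx at 1. apply (pair_inv P x). lra.
Qed.

Lemma commute01_inverse psi : pl_homeo psi -> commute01 psi f -> commute01 psi g.
Proof.
  intros Hpsi Hc x Hx.
  pose proof (pl_range (pair_snd P) x Hx) as Hgx.
  pose proof (Hc (g x) Hgx) as E. rewrite (proj2 (pair_inv P x Hx)) in E.
  rewrite E, (proj1 (pair_inv P _ (pl_range Hpsi _ Hgx))). reflexivity.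
Qed.

End PLPair.

Lemma commute01_sym f g : commute01 f g -> commute01 g f.
Proof. intros Hc x Hx. symmetry. apply Hc, Hx. Qed.

Lemma pl_pair_id : pl_pair (fun x => x) (fun x => x).
Proof. split; [exact pl_homeo_id..|]. intros x _. split; reflexivity. Qed.

Lemma pl_pair_comp f g f' g' :
  pl_pair f g -> pl_pair f' g' -> pl_pair (fun t => f' (f t)) (fun t => g (g' t)).
Proof.
  intros P P'. split; [apply pl_homeo_comp; [exact (pair_fst P')|exact (pair_fst P)]
                      |apply pl_homeo_comp; [exact (pair_snd P)|exact (pair_snd P')]|].
  intros x Hx. split.
  - rewrite (proj1 (pair_inv P' _ (pl_range (pair_fst P) x Hx))). apply (pair_inv P x Hx).
  - rewrite (proj2 (pair_inv P _ (pl_range (pair_snd P') x Hx))). apply (pair_inv P' x Hx).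
Qed.

Lemma flip_comp f g x : flip f (flip g x) = flip (fun y => f (g y)) x.
Proof. unfold flip. replace (1 - (1 - g (1 - x))) with (g (1 - x)) by ring. reflexivity. Qed.

Lemma pl_homeo_flip f : pl_homeo f -> pl_homeo (flip f).
Proof.
  intros Hf. unfold flip. split.
  - rewrite Rminus_0_r, (pl_fix1 Hf). ring.
  - replace (1 - 1) with 0 by ring. rewrite (pl_fix0 Hf). ring.
  - intros x y Hx Hxy Hy. pose proof (pl_incr Hf (1 - y) (1 - x)). lra.
  - intros L HL. destruct (pl_right Hf (1 - L) ltac:(lra)) as [d [m [Hd [Hm [c Hc]]]]].
    exists d, m. repeat split; [lra..|]. exists (1 - m - c). intros x Hx.
    rewrite Hc by lra. ring.
  - intros L HL. destruct (pl_left Hf (1 - L) ltac:(lra)) as [d [m [Hd [Hm [c Hc]]]]].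
    exists d, m. repeat split; [lra..|]. exists (1 - m - c). intros x Hx.
    rewrite Hc by lra. ring.
Qed.

Lemma pl_pair_flip f g : pl_pair f g -> pl_pair (flip f) (flip g).
Proof.
  intros P. split; [apply pl_homeo_flip; exact (pair_fst P)|apply pl_homeo_flip; exact (pair_snd P)|].
  intros x Hx. rewrite !flip_comp. unfold flip.
  destruct (pair_inv P (1 - x) ltac:(lra)) as [-> ->]. split; ring.
Qed.

Section Words.
Variables f0 f1 g0 g1 : R -> R.
Hypotheses (P0 : pl_pair f0 g0) (P1 : pl_pair f1 g1).

Lemma weval_app u v t : weval f0 f1 g0 g1 (u ++ v) t = weval f0 f1 g0 g1 v (weval f0 f1 g0 g1 u t).
Proof. unfold weval. apply fold_left_app. Qed.

Lemma gen_pair l : pl_pair (gen f0 f1 g0 g1 l) (gen f0 f1 g0 g1 (fst l, negb (snd l))).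
Proof. destruct l as [[] []]; simpl; auto using pair_sym. Qed.

Lemma weval_pair w : pl_pair (weval f0 f1 g0 g1 w) (weval f0 f1 g0 g1 (winv w)).
Proof.
  induction w as [|l w IH]; [exact pl_pair_id|].
  replace (weval f0 f1 g0 g1 (winv (l :: w)))
    with (fun t => gen f0 f1 g0 g1 (fst l, negb (snd l)) (weval f0 f1 g0 g1 (winv w) t)).
  - exact (pl_pair_comp _ _ _ _ (gen_pair l) IH).
  - apply functional_extensionality. intro t. unfold winv. simpl. rewrite weval_app. reflexivity.
Qed.

Lemma relator_commute u v : standard_copy f0 f1 g0 g1 -> In (wcomm u v) relators ->
  commute01 (weval f0 f1 g0 g1 u) (weval f0 f1 g0 g1 v).
Proof.
  intros Hstd Hrel t Ht.
  assert (Hid : forall t, 0 <= t <= 1 -> weval f0 f1 g0 g1 (wcomm u v) t = t).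
  { apply Hstd. pose proof (we_rel [] [] _ Hrel) as E. rewrite app_nil_r in E. exact E. }
  destruct (weval_pair u) as [Hu Hui Iu]. destruct (weval_pair v) as [Hv Hvi Iv].
  specialize (Hid t Ht). unfold wcomm in Hid. rewrite !weval_app in Hid.
  pose proof (pl_range Hu t Ht) as R1. pose proof (pl_range Hv _ R1) as R2.
  pose proof (pl_range Hui _ R2) as R3.
  apply (f_equal (weval f0 f1 g0 g1 v)) in Hid. rewrite (proj2 (Iv _ R3)) in Hid.
  apply (f_equal (weval f0 f1 g0 g1 u)) in Hid. rewrite (proj2 (Iu _ R2)) in Hid.
  symmetry. exact Hid.
Qed.

Lemma weval_flip w t :
  weval (flip f0) (flip f1) (flip g0) (flip g1) w t = flip (weval f0 f1 g0 g1 w) t.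
Proof.
  revert t. induction w as [|l w IH]; intro t; [unfold flip; simpl; ring|].
  change (weval (flip f0) (flip f1) (flip g0) (flip g1) w
            (gen (flip f0) (flip f1) (flip g0) (flip g1) l t)
          = flip (fun y => weval f0 f1 g0 g1 w (gen f0 f1 g0 g1 l y)) t).
  rewrite <- flip_comp, <- IH. destruct l as [[] []]; reflexivity.
Qed.

End Words.

Lemma standard_copy_flip f0 f1 g0 g1 :
  standard_copy f0 f1 g0 g1 -> standard_copy (flip f0) (flip f1) (flip g0) (flip g1).
Proof.
  intros Hstd w. rewrite <- (Hstd w). setoid_rewrite weval_flip. unfold flip. split.
  - intros Hid t Ht. specialize (Hid (1 - t) ltac:(lra)).
    replace (1 - (1 - t)) with t in Hid by ring. lra.
  - intros Hid t Ht. rewrite Hid by lra. ring.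
Qed.

Lemma left_affine_germ_minus f g L : pl_homeo f -> pl_homeo g -> 0 < L <= 1 ->
  exists d m, 0 < d /\ affine_on (fun x => f x - g x) m (L - d) L.
Proof.
  intros Hf Hg HL.
  destruct (pl_left Hf L HL) as [d1 [m1 [Hd1 [_ Hf1]]]].
  destruct (pl_left Hg L HL) as [d2 [m2 [Hd2 [_ Hg2]]]].
  exists (Rmin d1 d2), (m1 - m2). split; [apply Rmin_glb_lt; assumption|].
  pose proof (Rmin_l d1 d2). pose proof (Rmin_r d1 d2).
  apply affine_on_minus; eapply affine_on_sub; eauto; lra.
Qed.

Lemma exists_last_zero (D : R -> R) lo hi :
  lo <= hi -> D lo = 0 ->
  (forall L, lo < L <= hi -> exists d m, 0 < d /\ affine_on D m (L - d) L) ->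
  exists z, lo <= z <= hi /\ D z = 0 /\ forall x, z < x <= hi -> D x <> 0.
Proof.
  intros Hlohi HDlo Hgerm.
  set (Z := fun x => lo <= x <= hi /\ D x = 0).
  assert (HZ : bound Z) by (exists hi; intros x [Hx _]; lra).
  destruct (completeness Z HZ (ex_intro _ lo (conj (conj (Rle_refl _) Hlohi) HDlo)))
    as [z [Hub Hlub]].
  assert (Hloz : lo <= z) by (apply Hub; split; [lra|exact HDlo]).
  assert (Hzhi : z <= hi) by (apply Hlub; intros x [Hx _]; lra).
  assert (Happrox : forall r, r < z -> exists x, Z x /\ r < x).
  { intros r Hr. apply NNPP. intro Hno. assert (z <= r); [|lra].
    apply Hlub. intros x Hx. apply Rnot_lt_le. intro Hrx. apply Hno. exists x. auto. }
  exists z. split; [lra|split].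
  - apply NNPP. intro HDz.
    assert (Hz : lo < z) by (destruct (Req_dec lo z) as [<-|]; [contradiction|lra]).
    destruct (Hgerm z ltac:(lra)) as [d [m [Hd [c Hc]]]].
    (* two distinct zeros left of z in the affine window force the affine piece to vanish *)
    destruct (Happrox (z - d) ltac:(lra)) as [x1 [[Hx1 Dx1] Hdx1]].
    assert (x1 <= z) by (apply Hub; split; assumption).
    assert (x1 <> z) by (intros ->; contradiction).
    destruct (Happrox x1 ltac:(lra)) as [x2 [[Hx2 Dx2] Hx12]].
    assert (x2 <= z) by (apply Hub; split; assumption).
    rewrite Hc in Dx1, Dx2, HDz by lra.
    assert (Hm : m * (x2 - x1) = 0) by lra.
    destruct (Rmult_integral _ _ Hm); [subst m|]; lra.
  - intros x Hx HDx. assert (x <= z) by (apply Hub; split; [lra|exact HDx]). lra.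
Qed.

Section Iterates.
Context {c : R -> R} (Hc : pl_homeo c).

Lemma iter_range n x : 0 <= x <= 1 -> 0 <= Nat.iter n c x <= 1.
Proof. intros Hx. induction n as [|n IH]; [exact Hx|apply (pl_range Hc), IH]. Qed.

Lemma iter_inj n x y : 0 <= x <= 1 -> 0 <= y <= 1 -> Nat.iter n c x = Nat.iter n c y -> x = y.
Proof.
  intros Hx Hy. induction n as [|n IH]; [easy|].
  intro E. apply IH. exact (pl_inj Hc _ _ (iter_range n x Hx) (iter_range n y Hy) E).
Qed.

Lemma commute01_iter psi n x : commute01 psi c -> 0 <= x <= 1 ->
  psi (Nat.iter n c x) = Nat.iter n c (psi x).
Proof.
  intros Hcomm Hx. induction n as [|n IH]; [reflexivity|].
  simpl. rewrite Hcomm by exact (iter_range n x Hx). rewrite IH. reflexivity.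
Qed.

Lemma orbit_limit_fixed (u : nat -> R) L : (forall n, u (S n) = c (u n)) ->
  Un_cv u L -> (forall n, L <= u n) -> 0 <= L < 1 -> c L = L.
Proof.
  intros Hu Hcv HLu HL. apply NNPP. intro Hne.
  destruct (pl_right Hc L HL) as [d [m [Hd [Hm [c0 Hc0]]]]].
  assert (Hgap : 0 < Rabs (L - c L)) by (apply Rabs_pos_lt; lra).
  set (e := Rmin d (Rabs (L - c L) / (m + 1))).
  assert (He : 0 < e) by (apply Rmin_glb_lt; [|apply Rdiv_lt_0_compat]; lra).
  assert (Hed : e <= d) by apply Rmin_l.
  assert (Heg : (m + 1) * e <= Rabs (L - c L)).
  { replace (Rabs (L - c L)) with ((m + 1) * (Rabs (L - c L) / (m + 1))) by (field; lra).
    apply Rmult_le_compat_l; [lra|apply Rmin_r]. }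
  destruct (Hcv e He) as [N HN].
  pose proof (HN N (le_n N)) as A. pose proof (HN (S N) (le_S _ _ (le_n N))) as B.
  unfold R_dist in A, B. apply Rabs_def2 in A. apply Rabs_def2 in B.
  pose proof (HLu N). pose proof (HLu (S N)).
  (* c is affine on [L, L + d], which contains u N, so c L is within (m + 1) e of L *)
  rewrite Hu, Hc0 in B by lra. rewrite Hc0 in Hgap, Heg by lra.
  unfold Rabs in Heg. destruct (Rcase_abs (L - (m * L + c0))); nra.
Qed.

Section Orbit.
Context {s x : R} (Hcs : c s = s) (Hs : 0 <= s) (Hsx : s < x <= 1) (Hcx : c x < x).

Lemma orbit_descends n : s < Nat.iter (S n) c x < Nat.iter n c x /\ Nat.iter n c x <= x.
Proof.
  induction n as [|n IH].
  - simpl. pose proof (pl_incr Hc s x Hs ltac:(lra) ltac:(lra)). lra.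
  - destruct IH as [[H1 H2] H3]. set (y := Nat.iter n c x) in *.
    change (Nat.iter (S (S n)) c x) with (c (c y)). change (Nat.iter (S n) c x) with (c y) in *.
    pose proof (pl_incr Hc s (c y) Hs H1 ltac:(lra)).
    pose proof (pl_incr Hc (c y) y ltac:(lra) H2 ltac:(lra)). lra.
Qed.

Lemma orbit_approaches d : (forall y, s < y <= x -> c y <> y) -> 0 < d ->
  exists N, Nat.iter N c x < s + d.
Proof.
  intros Hmv Hd. set (u := fun n => Nat.iter n c x).
  assert (Hdec : Un_decreasing u) by (intro n; destruct (orbit_descends n); unfold u; lra).
  assert (Hlb : has_lb u).
  { exists (- s). intros y [n ->]. unfold opp_seq, u. destruct (orbit_descends n). lra. }
  destruct (decreasing_cv u Hdec Hlb) as [L HL].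
  pose proof (decreasing_ineq u L Hdec HL) as HLu.
  destruct (Rlt_or_le L (s + d)) as [Hlt|Hge].
  - destruct (HL (s + d - L) ltac:(lra)) as [N HN]. exists N.
    specialize (HN N (le_n N)). unfold R_dist in HN. apply Rabs_def2 in HN. unfold u in HN. lra.
  - exfalso. pose proof (HLu 0%nat) as HLx. simpl in HLx.
    assert (Hx1 : x < 1) by (destruct (Req_dec x 1) as [->|]; [rewrite (pl_fix1 Hc) in Hcx|]; lra).
    apply (Hmv L); [lra|]. apply (orbit_limit_fixed u); auto; lra.
Qed.

End Orbit.
End Iterates.

Section Centralizer.
Context {psi : R -> R} (Hpsi : pl_homeo psi).

Lemma commuting_fixes_near c s x : pl_homeo c -> commute01 psi c ->
  c s = s -> 0 <= s -> s < x <= 1 -> (forall y, s < y <= x -> c y <> y) -> c x < x ->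
  psi x = x -> exists d, 0 < d /\ forall y, s <= y <= s + d -> psi y = y.
Proof.
  intros Hc Hcomm Hcs Hs Hsx Hmv Hcx Hpx.
  destruct (pl_right Hpsi s ltac:(lra)) as [d [m [Hd [_ [b Hb]]]]].
  destruct (orbit_approaches Hc Hcs Hs Hsx Hcx d Hmv Hd) as [N HN].
  destruct (orbit_descends Hc Hcs Hs Hsx Hcx N) as [[H1 H2] _].
  pose proof (commute01_iter Hc psi N x Hcomm ltac:(lra)) as E1.
  pose proof (commute01_iter Hc psi (S N) x Hcomm ltac:(lra)) as E2.
  rewrite Hpx in E1, E2. rewrite Hb in E1, E2 by lra.
  assert (Hm : (m - 1) * (Nat.iter N c x - Nat.iter (S N) c x) = 0) by lra.
  destruct (Rmult_integral _ _ Hm) as [Hm1|]; [|lra].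
  exists d. split; [exact Hd|]. intros y Hy. rewrite Hb by exact Hy.
  replace m with 1 in * by lra. lra.
Qed.

Lemma commuting_fixes_via_orbit c s d x : pl_homeo c -> commute01 psi c ->
  c s = s -> 0 <= s -> s < x <= 1 -> (forall y, s < y <= x -> c y <> y) -> c x < x ->
  0 < d -> (forall y, s <= y <= s + d -> psi y = y) -> psi x = x.
Proof.
  intros Hc Hcomm Hcs Hs Hsx Hmv Hcx Hd Hid.
  destruct (orbit_approaches Hc Hcs Hs Hsx Hcx d Hmv Hd) as [N HN].
  destruct (orbit_descends Hc Hcs Hs Hsx Hcx N) as [[H1 H2] _].
  pose proof (commute01_iter Hc psi N x Hcomm ltac:(lra)) as E.
  rewrite Hid in E by lra.
  symmetry. apply (iter_inj Hc N); [lra|apply (pl_range Hpsi); lra|exact E].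
Qed.

Lemma commuting_fixes_orbital phi phii s t y : pl_pair phi phii -> commute01 psi phi ->
  0 <= s < t -> t <= 1 -> moves_after phi s t -> s < y <= t -> psi y = y ->
  forall x, s < x <= t -> psi x = x.
Proof.
  intros P Hcomm Hst Ht Hmv Hy Hpy.
  pose proof (commute01_inverse P psi Hpsi Hcomm) as Hcomm'.
  destruct (moves_after_inverse P s t ltac:(lra) Ht Hmv) as [Hs' Hmv'].
  destruct Hmv as [Hs Hmv].
  assert (Hnear : exists d, 0 < d /\ forall z, s <= z <= s + d -> psi z = z).
  { destruct (pair_moves_down P y ltac:(lra) (Hmv y Hy)) as [Hd|Hd];
      [apply (commuting_fixes_near phi s y (pair_fst P))
      |apply (commuting_fixes_near phii s y (pair_snd P))]; auto; try lra;
      intros z Hz; [apply Hmv|apply Hmv']; lra. }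
  destruct Hnear as [d [Hd Hid]]. intros x Hx.
  destruct (pair_moves_down P x ltac:(lra) (Hmv x Hx)) as [Hdx|Hdx];
    [apply (commuting_fixes_via_orbit phi s d x (pair_fst P))
    |apply (commuting_fixes_via_orbit phii s d x (pair_snd P))]; auto; try lra;
    intros z Hz; [apply Hmv|apply Hmv']; lra.
Qed.

End Centralizer.

Lemma commuting_fixes_image phi phii psi s z : pl_pair phi phii -> commute01 psi phi ->
  phi s = s -> 0 <= s <= z -> z <= 1 -> (forall x, s < x <= z -> psi x = x) ->
  forall y, s < y <= phi z -> psi y = y.
Proof.
  intros P Hcomm Hphs Hs Hz Hid y Hy.
  pose proof (pl_range (pair_fst P) z ltac:(lra)) as Hphz.
  assert (Hpreim : s < phii y <= z).
  { rewrite <- (pair_fixed P s ltac:(lra) Hphs) at 1.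
    rewrite <- (proj1 (pair_inv P z ltac:(lra))).
    split; [apply (pl_incr (pair_snd P))|apply (pl_le (pair_snd P))]; lra. }
  rewrite <- (proj2 (pair_inv P y ltac:(lra))).
  rewrite Hcomm by lra. rewrite Hid by exact Hpreim. reflexivity.
Qed.

Lemma conj_fixed_iff p pi f x : pl_pair p pi -> pl_homeo f -> 0 <= x <= 1 ->
  p (f (pi x)) = x <-> f (pi x) = pi x.
Proof.
  intros P Hf Hx. pose proof (pl_range (pair_snd P) x Hx) as Hpix. split; intro E.
  - rewrite <- (proj1 (pair_inv P _ (pl_range Hf _ Hpix))), E. reflexivity.
  - rewrite E. apply (pair_inv P x Hx).
Qed.

Section UpCase.
Variables f0 f1 g0 g1 : R -> R.
Hypotheses (P0 : pl_pair f0 g0) (P1 : pl_pair f1 g1) (Hstd : standard_copy f0 f1 g0 g1).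

Let h t := g1 (f0 t).
Let k t := f0 (f1 (g0 t)).
Let k2 t := f0 (f0 (f1 (g0 (g0 t)))).

Lemma h_pair : pl_pair h (fun t => g0 (f1 t)).
Proof. exact (weval_pair f0 f1 g0 g1 P0 P1 (X0 ++ winv X1)). Qed.

Lemma k_pair : pl_pair k (fun t => f0 (g1 (g0 t))).
Proof. exact (weval_pair f0 f1 g0 g1 P0 P1 (wconj X1 X0)). Qed.

Lemma k2_homeo : pl_homeo k2.
Proof. exact (pair_fst (weval_pair f0 f1 g0 g1 P0 P1 (wconj X1 (X0 ++ X0)))). Qed.

Lemma h_commute_k : commute01 h k.
Proof. apply (relator_commute f0 f1 g0 g1 P0 P1 (X0 ++ winv X1) (wconj X1 X0) Hstd). left. reflexivity. Qed.

Lemma h_commute_k2 : commute01 h k2.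
Proof.
  apply (relator_commute f0 f1 g0 g1 P0 P1 (X0 ++ winv X1) (wconj X1 (X0 ++ X0)) Hstd).
  right. left. reflexivity.
Qed.

Lemma h_fixed_iff x : 0 <= x <= 1 -> h x = x <-> f0 x = f1 x.
Proof.
  intros Hx. unfold h. split; intro E.
  - rewrite <- E at 2. symmetry. apply (pair_inv P1). apply (pl_range (pair_fst P0) x Hx).
  - rewrite E. apply (pair_inv P1 x Hx).
Qed.

Lemma k_fixed_iff x : 0 <= x <= 1 -> k x = x <-> f1 (g0 x) = g0 x.
Proof. apply (conj_fixed_iff f0 g0 f1 x P0 (pair_fst P1)). Qed.

Lemma k2_fixed_iff x : 0 <= x <= 1 -> k2 x = x <-> f1 (g0 (g0 x)) = g0 (g0 x).
Proof. apply (conj_fixed_iff _ _ f1 x (pl_pair_comp _ _ _ _ P0 P0) (pair_fst P1)). Qed.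

Section Configuration.
Variables u z b : R.
Hypotheses (Hu : 0 <= u) (Huz : u < z) (Hzb : z < b) (Hb : b <= 1)
  (Hz_up : z < f0 z) (Hz_agree : f0 z = f1 z) (Hb_fix : f1 b = b)
  (Hh : moves_after h z b) (Hf1 : moves_after f1 u z).

Lemma f0_z_lt_b : f0 z < b.
Proof. rewrite Hz_agree, <- Hb_fix. apply (pl_incr (pair_fst P1)); lra. Qed.

Lemma image_above_last_agreement : z < f0 u -> False.
Proof.
  intros Hzu. pose proof f0_z_lt_b.
  assert (Hu_img : f0 u < f0 z) by (apply (pl_incr (pair_fst P0)); lra).
  assert (Hk : forall x, z < x <= b -> k x = x).
  { apply (commuting_fixes_orbital (pair_fst k_pair) h _ z b (f0 u) h_pair
             (commute01_sym _ _ h_commute_k)); try lra; [exact Hh|].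
    apply k_fixed_iff; [lra|]. rewrite (proj1 (pair_inv P0 u ltac:(lra))). exact (proj1 Hf1). }
  pose proof (Hk (f0 z) ltac:(lra)) as Hkz. apply k_fixed_iff in Hkz; [|lra].
  rewrite (proj1 (pair_inv P0 z ltac:(lra))) in Hkz. lra.
Qed.

Lemma image_at_last_agreement : f0 u = z -> False.
Proof.
  intros Hu_z. pose proof f0_z_lt_b as Hfzb.
  assert (Hgz : g0 z = u) by (rewrite <- Hu_z; apply (pair_inv P0); lra).
  assert (Hgfz : g0 (f0 z) = z) by (apply (pair_inv P0); lra).
  assert (Hk2 : forall x, z < x <= b -> k2 x = x).
  { apply (commuting_fixes_orbital k2_homeo h _ z b (f0 z) h_pair
             (commute01_sym _ _ h_commute_k2)); try lra; [exact Hh|].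
    apply k2_fixed_iff; [lra|]. rewrite Hgfz, Hgz. exact (proj1 Hf1). }
  destruct (pl_pair_comp _ _ _ _ P0 P0) as [F00 G00 I00]. cbv beta in I00.
  assert (Hu_gb : u < g0 (g0 b)).
  { rewrite <- Hgz, <- Hgfz. apply (pl_incr G00); lra. }
  set (y := Rmin z (g0 (g0 b))).
  assert (Hy : u < y <= z) by (split; [apply Rmin_glb_lt|apply Rmin_l]; lra).
  pose proof (pl_range G00 b ltac:(lra)).
  assert (Hx : z < f0 (f0 y) <= b).
  { split.
    - apply Rlt_le_trans with (f0 z); [lra|]. rewrite <- Hu_z. apply (pl_le F00); lra.
    - rewrite <- (proj2 (I00 b ltac:(lra))). apply (pl_le F00); [lra|apply Rmin_r|lra]. }
  apply (proj2 Hf1 y Hy).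
  pose proof (Hk2 _ Hx) as Hfix. apply k2_fixed_iff in Hfix; [|lra].
  rewrite (proj1 (I00 y ltac:(lra))) in Hfix. exact Hfix.
Qed.

Lemma image_below_last_agreement : f0 u < z -> False.
Proof.
  intros Hs. pose proof (pl_range (pair_fst P0) u ltac:(lra)) as Hs01.
  set (s := f0 u) in *.
  assert (Hgs : g0 s = u) by (apply (pair_inv P0); lra).
  assert (Hgz : g0 z < z).
  { rewrite <- (proj1 (pair_inv P0 z ltac:(lra))) at 2. pose proof f0_z_lt_b.
    apply (pl_incr (pair_snd P0)); lra. }
  assert (Hk : moves_after k s z).
  { split; [apply k_fixed_iff; [lra|]; rewrite Hgs; exact (proj1 Hf1)|].
    intros x Hx Hkx. apply k_fixed_iff in Hkx; [|lra]. apply (proj2 Hf1 (g0 x)); [|exact Hkx].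
    rewrite <- Hgs. split; [apply (pl_incr (pair_snd P0))|]; try lra.
    pose proof (pl_le (pair_snd P0) x z ltac:(lra) ltac:(lra) ltac:(lra)). lra. }
  assert (Hid : forall x, s < x <= z -> h x = x).
  { apply (commuting_fixes_orbital (pair_fst h_pair) k _ s z z k_pair h_commute_k);
      try lra; [exact Hk|exact (proj1 Hh)]. }
  (* k or its inverse pushes z to the right, and transports the fixed points of h beyond z *)
  destruct (pair_moves_up k_pair z ltac:(lra) (proj2 Hk z ltac:(lra))) as [Hkz|Hkz].
  - apply (proj2 Hh (Rmin (k z) b)); [split; [apply Rmin_glb_lt|apply Rmin_r]; lra|].
    apply (commuting_fixes_image k _ h s z k_pair h_commute_k (proj1 Hk) ltac:(lra) ltac:(lra) Hid).
    split; [apply Rmin_glb_lt|apply Rmin_l]; lra.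
  - cbv beta in Hkz.
    apply (proj2 Hh (Rmin (f0 (g1 (g0 z))) b)); [split; [apply Rmin_glb_lt|apply Rmin_r]; lra|].
    apply (commuting_fixes_image _ k h s z (pair_sym k_pair)
             (commute01_inverse k_pair h (pair_fst h_pair) h_commute_k)
             (pair_fixed k_pair s ltac:(lra) (proj1 Hk)) ltac:(lra) ltac:(lra) Hid).
    split; [apply Rmin_glb_lt|apply Rmin_l]; lra.
Qed.

End Configuration.

Lemma no_agreement_below_fixed_point a q b c :
  0 <= a -> a < q -> q <= b -> b < c -> c <= 1 ->
  (forall x, a < x < c -> x < f0 x) -> f1 b = b -> f0 q <> f1 q.
Proof.
  intros Ha Haq Hqb Hbc Hc Hup Hb Hq.
  destruct (exists_last_zero (fun x => f0 x - f1 x) q b Hqb ltac:(lra))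
    as [z [Hz [Dz Hlast]]].
  { intros L HL. apply left_affine_germ_minus; [exact (pair_fst P0)|exact (pair_fst P1)|lra]. }
  assert (Hz_up : z < f0 z) by (apply Hup; lra).
  assert (Hzb : z < b) by (destruct (Req_dec z b) as [->|]; lra).
  destruct (exists_last_zero (fun x => f1 x - x) 0 z ltac:(lra)
              ltac:(cbv beta; rewrite (pl_fix0 (pair_fst P1)); ring)) as [u [Hu [Du Hlast_u]]].
  { intros L HL. apply left_affine_germ_minus; [exact (pair_fst P1)|exact pl_homeo_id|lra]. }
  assert (Huz : u < z) by (destruct (Req_dec u z) as [->|]; lra).
  assert (Hh : moves_after h z b).
  { split; [apply h_fixed_iff; lra|].
    intros x Hx Hhx. apply (Hlast x Hx). apply h_fixed_iff in Hhx; lra. }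
  assert (Hf1 : moves_after f1 u z) by (split; [lra|intros x Hx E; apply (Hlast_u x Hx); lra]).
  destruct (Rtotal_order (f0 u) z) as [Hlt|[Heq|Hgt]];
    [apply (image_below_last_agreement u z b)|apply (image_at_last_agreement u z b)|apply (image_above_last_agreement u z b)]; auto; lra.
Qed.

End UpCase.

Lemma fixed_of_not_in_supp f x : 0 <= x <= 1 -> ~ in_supp f x -> f x = x.
Proof. intros Hx Hn. apply NNPP. intro Hfx. exact (Hn (conj Hx Hfx)). Qed.

Theorem lemma2p9 (f0 f1 g0 g1 : R -> R) :
  PL0 f0 -> PL0 f1 -> PL0_inverse f0 g0 -> PL0_inverse f1 g1 ->
  standard_copy f0 f1 g0 g1 ->
  (* (Up) *)
  (forall a c bn p q : R,
     up_bump f0 a c -> orbital f1 bn c ->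
     0 <= p <= c -> agree_on f0 f1 p c ->
     (forall p', 0 <= p' -> agree_on f0 f1 p' c -> p <= p') ->
     a < q < p -> f0 q = f1 q -> bn < q < p) /\
  (* (Down) *)
  (forall a c d1 rho q : R,
     down_bump f0 a c -> orbital f1 a d1 ->
     a <= rho <= 1 -> agree_on f0 f1 a rho ->
     (forall r', r' <= 1 -> agree_on f0 f1 a r' -> r' <= rho) ->
     rho < q < c -> f0 q = f1 q -> rho < q < d1).
Proof.
  intros Hf0 Hf1 Hg0 Hg1 Hstd.
  pose proof (PL0_pair f0 g0 Hf0 Hg0) as P0. pose proof (PL0_pair f1 g1 Hf1 Hg1) as P1.
  split.
  - intros a c bn p q [[[Ha _] [Hc _]] Hup] [[Hb Hbc] [_ [Hnb _]]] _ _ _ Hq Heq.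
    split; [|lra]. apply Rnot_le_lt. intro Hqb.
    apply (no_agreement_below_fixed_point f0 f1 g0 g1 P0 P1 Hstd a q bn c); auto; try lra.
    apply fixed_of_not_in_supp; [lra|exact Hnb].
  - intros a c d1 rho q [[[Ha _] [Hc _]] Hdown] [[_ Had] [_ [_ [Hnd _]]]] _ _ _ Hq Heq.
    split; [lra|]. apply Rnot_le_lt. intro Hdq.
    apply (no_agreement_below_fixed_point _ _ _ _ (pl_pair_flip _ _ P0) (pl_pair_flip _ _ P1)
             (standard_copy_flip _ _ _ _ Hstd) (1 - c) (1 - q) (1 - d1) (1 - a)); try lra;
      unfold flip.
    + intros x Hx. pose proof (Hdown (1 - x) ltac:(lra)). lra.
    + replace (1 - (1 - d1)) with d1 by ring.
      rewrite (fixed_of_not_in_supp f1 d1 ltac:(lra) Hnd). ring.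
    + replace (1 - (1 - q)) with q by ring. rewrite Heq. ring.
Qed.
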